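(* Consider the distributed detection model in the context, where the fusion center knows $(\alpha,P_{1,0},P_{0,1})$ and uses the optimal (MAP) fusion rule, and let $P_E^*(P_{1,0},P_{0,1})$ denote its resulting error probability. Then the attacking strategies $(P_{1,0}^*,P_{0,1}^* )\in[0,1]^2$ maximizing $P_E^*$ are as follows: if $\alpha>0.5$, any pair $(p_{1,0},p_{0,1})\in[0,1]^2$ satisfying $\alpha(p_{1,0}+p_{0,1})=1$ is optimal; if $\alpha\le 0.5$, $(P_{1,0}^*,P_{0,1}^* )=(1,1)$ is optimal.
   Context: Binary hypothesis test between $H_0$ and $H_1$ with priors $P_0,P_1\in(0,1)$, $P_0+P_1=1$. There are $N$ sensors, each using the same fixed local threshold, so that conditionally on the hypothesis their local decisions $v_i\in\{0,1\}$ are i.i.d. with $P(v_i=1\mid H_1)=P_d$, $P(v_i=1\mid H_0)=P_f$, where $0<P_f<P_d<1$. Each sensor independently is Byzantine with probability $\alpha\in[0,1]$. Honest nodes send $u_i=v_i$; a Byzantine node sends $u_i=1$ with probability $P_{1,0}$ when $v_i=0$ and sends $u_i=0$ with probability $P_{0,1}$ when $v_i=1$. Hence conditionally on $H_j$ the $u_i$ are i.i.d. with $P(u_i=1\mid H_0)=\pi_{1,0}=\alpha(P_{1,0}(1-P_f)+(1-P_{0,1})P_f)+(1-\alpha)P_f$ and $P(u_i=1\mid H_1)=\pi_{1,1}=\alpha(P_{1,0}(1-P_d)+(1-P_{0,1})P_d)+(1-\alpha)P_d$. The MAP fusion rule decides $H_1$ when $P(\mathbf u\mid H_1)/P(\mathbf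 u\mid H_0)>P_0/P_1$ and $H_0$ otherwise; it minimizes the error probability $P(\text{decide }H_1, H_0)+P(\text{decide }H_0,H_1)$ among all fusion rules based on $\mathbf u=(u_1,\dots,u_N)$, and this minimum is $P_E^*$. Equivalently, when $\pi_{1,1}>\pi_{1,0}$ it is the $K$-out-of-$N$ rule deciding $H_1$ iff the number of ones is at least $\left\lceil \ln\left[\frac{P_0}{P_1}\left(\frac{1-\pi_{1,0}}{1-\pi_{1,1}}\right)^{N}\right]\Big/\ln\left[\frac{\pi_{1,1}(1-\pi_{1,0})}{\pi_{1,0}(1-\pi_{1,1})}\right]\right\rceil$. *)

From HB Require Import structures.
From mathcomp Require Import all_boot all_order all_algebra.
Set Implicit Arguments. Unset Strict Implicit. Unset Printing Implicit Defensive.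
Import Order.TTheory GRing.Theory Num.Theory.
Local Open Scope ring_scope.

Section Defs.
Variable R : realFieldType.

(* P(u_i = 1 | H0) *)
Definition pi10 (alpha Pf p10 p01 : R) : R :=
  alpha * (p10 * (1 - Pf) + (1 - p01) * Pf) + (1 - alpha) * Pf.
(* P(u_i = 1 | H1) *)
Definition pi11 (alpha Pd p10 p01 : R) : R :=
  alpha * (p10 * (1 - Pd) + (1 - p01) * Pd) + (1 - alpha) * Pd.

Definition lik (N : nat) (p : R) (u : {ffun 'I_N -> bool}) : R :=
  \prod_(i < N) (if u i then p else 1 - p).

(* Error probability P(decide H1, H0) + P(decide H0, H1) of the MAP fusion
   rule, which decides H1 iff P(u|H1)/P(u|H0) > P0/P1, written in the
   cross-multiplied form P1 P(u|H1) > P0 P(u|H0). *)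
Definition map_error (N : nat) (P0 alpha Pd Pf p10 p01 : R) : R :=
  let P1 := 1 - P0 in
  \sum_(u : {ffun 'I_N -> bool})
    (if P1 * lik (pi11 alpha Pd p10 p01) u > P0 * lik (pi10 alpha Pf p10 p01) u
     then P0 * lik (pi10 alpha Pf p10 p01) u
     else P1 * lik (pi11 alpha Pd p10 p01) u).

Definition in01 (x : R) : Prop := 0 <= x <= 1.

Definition optimal_attack (N : nat) (P0 alpha Pd Pf p10 p01 : R) : Prop :=
  in01 p10 /\ in01 p01 /\
  forall q10 q01 : R, in01 q10 -> in01 q01 ->
    map_error N P0 alpha Pd Pf q10 q01 <= map_error N P0 alpha Pd Pf p10 p01.

End Defs.

(* The MAP error is the Bayes risk sum_u min(P0 P(u|H0), P1 P(u|H1)), which never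
   exceeds min(P0, P1), with equality when P(u|H0) = P(u|H1).  If alpha (p10 + p01) = 1
   then pi10 = pi11, so such an attack blinds the fusion center and is optimal.
   If 2 alpha < 1 this is impossible, but for any attack (q10, q01) the reports of the
   full-flip attack (1, 1) are obtained from those of (q10, q01) by passing each bit
   through one fixed binary channel, independently of the hypothesis; by the
   data-processing inequality the Bayes risk can only increase under such garbling. *)
From HB Require Import structures.
From mathcomp Require Import all_boot all_order all_algebra.
From mathcomp Require Import ring lra.
Set Implicit Arguments. Unset Strict Implicit. Unset Printing Implicit Defensive.
Import Order.TTheory GRing.Theory Num.Theory.
Local Open Scope ring_scope.

Section BayesRisk.
Variables (R : realFieldType) (N : nat).

Notation report := {ffun 'I_N -> bool}.

Definition bayes_error (P0 p q : R) : R :=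
  \sum_(u : report) Num.min (P0 * lik p u) ((1 - P0) * lik q u).

Lemma sum_ffun_prod (F : 'I_N -> bool -> R) :
  \sum_(u : report) \prod_(i < N) F i (u i) = \prod_(i < N) (F i true + F i false).
Proof. by rewrite -bigA_distr_bigA; apply: eq_bigr => i _; rewrite big_bool. Qed.

Lemma sum_lik (p : R) : \sum_(u : report) lik p u = 1.
Proof.
rewrite (sum_ffun_prod (fun _ b => if b then p else 1 - p)).
by rewrite big1 // => i _; rewrite addrC subrK.
Qed.

Lemma lik_ge0 (p : R) (u : report) : in01 p -> 0 <= lik p u.
Proof.
move=> /andP[p_ge0 p_le1]; apply: prodr_ge0 => i _.
by case: (u i); rewrite ?subr_ge0.
Qed.

Lemma bayes_error_le_min (P0 p q : R) : bayes_error P0 p q <= Num.min P0 (1 - P0).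
Proof.
have sum_mul_lik (a r : R) : \sum_(u : report) a * lik r u = a.
  by rewrite -mulr_sumr sum_lik mulr1.
rewrite le_min; apply/andP; split.
- rewrite -[leRHS](sum_mul_lik _ p); apply: ler_sum => u _.
  by rewrite ge_min lexx.
- rewrite -[leRHS](sum_mul_lik _ q); apply: ler_sum => u _.
  by rewrite ge_min lexx orbT.
Qed.

Lemma bayes_error_same (P0 p : R) : in01 p -> bayes_error P0 p p = Num.min P0 (1 - P0).
Proof.
move=> p_in01; rewrite /bayes_error.
under eq_bigr => u _ do rewrite -minr_pMl ?lik_ge0 //.
by rewrite -mulr_sumr sum_lik mulr1.
Qed.

Definition channel (m0 m1 : R) (b c : bool) : R :=
  if c then (if b then m1 else m0) else (if b then 1 - m1 else 1 - m0).

Definition channel_out (m0 m1 p : R) : R := (1 - p) * m0 + p * m1.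

Lemma channel_ge0 (m0 m1 : R) b c : in01 m0 -> in01 m1 -> 0 <= channel m0 m1 b c.
Proof.
move=> /andP[? ?] /andP[? ?].
by rewrite /channel; case: b; case: c; rewrite ?subr_ge0.
Qed.

Lemma sum_channel (m0 m1 : R) (u : report) :
  \sum_(v : report) \prod_(i < N) channel m0 m1 (u i) (v i) = 1.
Proof.
rewrite (sum_ffun_prod (fun i => channel m0 m1 (u i))) big1 // => i _.
by rewrite /channel; case: (u i); ring.
Qed.

Lemma lik_channel_out (m0 m1 p : R) (v : report) :
  lik (channel_out m0 m1 p) v =
  \sum_(u : report) (\prod_(i < N) channel m0 m1 (u i) (v i)) * lik p u.
Proof.
under [RHS]eq_bigr => u _ do rewrite -big_split /=.
rewrite (sum_ffun_prod (fun i b => channel m0 m1 b (v i) * (if b then p else 1 - p))).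
by apply: eq_bigr => i _; rewrite /channel /channel_out; case: (v i) => /=; ring.
Qed.

Lemma bayes_error_channel (P0 m0 m1 p q : R) : in01 m0 -> in01 m1 ->
  bayes_error P0 p q <= bayes_error P0 (channel_out m0 m1 p) (channel_out m0 m1 q).
Proof.
move=> m0_01 m1_01.
pose K (u v : report) := \prod_(i < N) channel m0 m1 (u i) (v i).
have K_ge0 u v : 0 <= K u v by apply: prodr_ge0 => i _; apply: channel_ge0.
have -> : bayes_error P0 p q = \sum_(v : report) \sum_(u : report)
    K u v * Num.min (P0 * lik p u) ((1 - P0) * lik q u).
  rewrite exchange_big; apply: eq_bigr => u _.
  by rewrite -mulr_suml sum_channel mul1r.
apply: ler_sum => v _; rewrite le_min !lik_channel_out !mulr_sumr.
apply/andP; split; apply: ler_sum => u _; rewrite mulrCA ler_wpM2l //.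
- by rewrite ge_min lexx.
- by rewrite ge_min lexx orbT.
Qed.

End BayesRisk.

Section Attacks.
Variables (R : realFieldType) (N : nat) (P0 alpha Pd Pf : R).
Hypothesis alpha01 : in01 alpha.

Lemma map_errorE p10 p01 :
  map_error N P0 alpha Pd Pf p10 p01 =
  bayes_error N P0 (pi10 alpha Pf p10 p01) (pi11 alpha Pd p10 p01).
Proof. by []. Qed.

Lemma pi10E (P p10 p01 : R) :
  pi10 alpha P p10 p01 = alpha * p10 + (1 - alpha * (p10 + p01)) * P.
Proof. by rewrite /pi10; ring. Qed.

Lemma pi11E (P p10 p01 : R) : pi11 alpha P p10 p01 = pi10 alpha P p10 p01.
Proof. by []. Qed.

Lemma pi10_in01 (P p10 p01 : R) :
  in01 P -> in01 p10 -> in01 p01 -> in01 (pi10 alpha P p10 p01).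
Proof.
move: alpha01; rewrite /in01 /pi10 => /andP[? ?] /andP[? ?] /andP[? ?] /andP[? ?].
have : 0 <= p10 * (1 - P) + (1 - p01) * P <= 1 by apply/andP; split; nra.
by move=> /andP[? ?]; apply/andP; split; nra.
Qed.

Lemma optimal_attack_blind (p10 p01 : R) : in01 Pf ->
  in01 p10 -> in01 p01 -> alpha * (p10 + p01) = 1 ->
  optimal_attack N P0 alpha Pd Pf p10 p01.
Proof.
move=> Pf01 p10_01 p01_01 blind; do 2 split => //.
move=> q10 q01 _ _; rewrite !map_errorE.
have -> : pi11 alpha Pd p10 p01 = pi10 alpha Pf p10 p01.
  by rewrite pi11E !pi10E blind subrr !mul0r.
by rewrite bayes_error_same ?bayes_error_le_min //; apply: pi10_in01.
Qed.

(* When 2 alpha < 1, the Bernoulli parameter alpha p10 + c P (c > 0) of any attack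
   is mapped to the parameter alpha + (1 - 2 alpha) P of the full-flip attack by
   a channel that does not depend on the sensor probability P. *)
Lemma full_flip_channel (q10 q01 : R) : 2 * alpha < 1 -> in01 q10 -> in01 q01 ->
  exists m0 m1, [/\ in01 m0, in01 m1 &
    forall P, channel_out m0 m1 (pi10 alpha P q10 q01) = pi10 alpha P 1 1].
Proof.
move: alpha01 => /andP[a_ge0 a_le1] small /andP[q10_ge0 q10_le1] /andP[q01_ge0 q01_le1].
pose c := 1 - alpha * (q10 + q01).
have c_gt0 : 0 < c by rewrite /c; nra.
pose d := c - q10 * (1 - 2 * alpha).
have d_ge0 : 0 <= d by rewrite /d /c; nra.
pose m0 := alpha * d / c.
pose m1 := (alpha * d + (1 - 2 * alpha)) / c.
have m1_le1 : alpha * d + (1 - 2 * alpha) <= c.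
  have -> : c = alpha * d + (1 - 2 * alpha)
             + alpha * ((1 - q01) * (1 - alpha) + alpha * (1 - q10)).
    by rewrite /d /c; ring.
  by rewrite lerDl mulr_ge0 // addr_ge0 // mulr_ge0 // subr_ge0.
exists m0, m1; split.
- rewrite /in01 /m0 divr_ge0 ?mulr_ge0 ?(ltW c_gt0) //= ler_pdivrMr // mul1r.
  by apply: le_trans m1_le1; rewrite lerDl subr_ge0 ltW.
- rewrite /in01 /m1 divr_ge0 ?(ltW c_gt0) //= ?ler_pdivrMr // ?mul1r //.
  by rewrite addr_ge0 ?mulr_ge0 // subr_ge0 ltW.
- move=> P; rewrite !pi10E /channel_out /m1 /m0 /d -/c.
  by field; rewrite gt_eqF.
Qed.

Lemma optimal_attack_full_flip : 2 * alpha < 1 ->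
  optimal_attack N P0 alpha Pd Pf 1 1.
Proof.
move=> small; have one01 : in01 (1 : R) by rewrite /in01 ler01 lexx.
do 2 split => //; move=> q10 q01 q10_01 q01_01.
have [m0 [m1 [m0_01 m1_01 flip]]] := full_flip_channel small q10_01 q01_01.
by rewrite !map_errorE !pi11E -!flip bayes_error_channel.
Qed.

End Attacks.

Theorem theorem3 (R : realFieldType) (N : nat) (P0 alpha Pd Pf : R) :
  0 < P0 < 1 -> 0 <= alpha <= 1 -> 0 < Pf -> Pf < Pd -> Pd < 1 ->
  (alpha > 2^-1 ->
     forall p10 p01 : R, in01 p10 -> in01 p01 -> alpha * (p10 + p01) = 1 ->
       optimal_attack N P0 alpha Pd Pf p10 p01) /\
  (alpha <= 2^-1 -> optimal_attack N P0 alpha Pd Pf 1 1).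
Proof.
move=> _ alpha01 Pf_gt0 Pf_lt_Pd Pd_lt1.
have Pf01 : in01 Pf by rewrite /in01 ltW //=; lra.
split=> [_ p10 p01|alpha_le_half]; first exact: optimal_attack_blind.
have one01 : in01 (1 : R) by rewrite /in01 ler01 lexx.
have [alpha_half|alpha_ne_half] := eqVneq alpha 2^-1.
  by apply: optimal_attack_blind => //; rewrite alpha_half; field.
apply: optimal_attack_full_flip => //.
have alpha_lt_half : alpha < 2^-1 by rewrite lt_neqAle alpha_ne_half.
by rewrite mulrC -ltr_pdivlMr ?mul1r.
Qed.
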